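(* Let $(Z,M,\mu)$ be a measure space with a non-trivial atomless measure $\mu$, and let $2 < a < b < \infty$. Let $\psi:(a,b)\to(0,\infty]$ be a generating function with $\inf_{p\in(a,b)}\psi(p)>0$, and let $G\psi = G\psi[a,b]$ be the associated Grand Lebesgue Space with norm $\|f\|G\psi = \sup_{p\in(a,b)} \|f\|_p/\psi(p)$. For $u\in G\psi$ put $$\theta[G\psi[a,b]](u) := \inf_{p\in(a,b)} \frac{\|u\|_p^p}{p\cdot 2^p\cdot \psi^p(p)}.$$ Then for all $x,y$ in the closed unit ball $B[G\psi[a,b]] = \{f\in G\psi: \|f\|G\psi\le 1\}$, $$\|x+y\|G\psi \le 2 - \theta[G\psi[a,b]](x-y).$$
   Context: For a measurable $f:Z\to\mathbb{R}$ and $1\le p<\infty$, $\|f\|_p = \left(\int_Z |f(z)|^p\,\mu(dz)\right)^{1/p}$. Given $1\le a<b\le\infty$ and a function $\psi:(a,b)\to(0,\infty]$ (possibly infinite at some points) with $\inf_{p\in(a,b)}\psi(p)>0$, the Grand Lebesgue Space $G\psi[a,b]$ consists of all real measurable functions $f$ on $Z$ with finite norm $\|f\|G\psi[a,b] := \sup_{p\in(a,b)} \|f\|_p/\psi(p)$, using the convention $C/\infty := 0$. *)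

From HB Require Import structures.
From mathcomp Require Import all_boot all_order all_algebra.
From mathcomp Require Import all_classical all_reals all_analysis.
Set Implicit Arguments. Unset Strict Implicit. Unset Printing Implicit Defensive.
Import Order.TTheory GRing.Theory Num.Theory.
Local Open Scope classical_set_scope.
Local Open Scope ring_scope.
Local Open Scope ereal_scope.

Definition nontrivial_measure {d} {T : measurableType d} {R : realType}
  (mu : {measure set T -> \bar R}) : Prop :=
  exists A, measurable A /\ 0 < mu A.

Definition atomless {d} {T : measurableType d} {R : realType}
  (mu : {measure set T -> \bar R}) : Prop :=
  forall A, measurable A -> 0 < mu A ->
    exists B, [/\ measurable B, B `<=` A, 0 < mu B & mu B < mu A].

(* ||f||_p / psi(p), with the convention C / +oo = 0 *)
Definition gls_ratio {d} {T : measurableType d} {R : realType}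
  (mu : {measure set T -> \bar R}) (psi : R -> \bar R) (f : T -> R) (p : R)
  : \bar R :=
  if psi p == +oo then 0
  else Lnorm mu p%:E (EFin \o f) * ((fine (psi p))^-1)%:E.

Definition gls_norm {d} {T : measurableType d} {R : realType}
  (mu : {measure set T -> \bar R}) (a b : R) (psi : R -> \bar R) (f : T -> R)
  : \bar R :=
  ereal_sup [set gls_ratio mu psi f p | p in `]a, b[%classic].

Definition in_gls {d} {T : measurableType d} {R : realType}
  (mu : {measure set T -> \bar R}) (a b : R) (psi : R -> \bar R) (f : T -> R)
  : Prop :=
  measurable_fun setT f /\ gls_norm mu a b psi f < +oo.

Definition in_gls_ball {d} {T : measurableType d} {R : realType}
  (mu : {measure set T -> \bar R}) (a b : R) (psi : R -> \bar R) (f : T -> R)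
  : Prop :=
  measurable_fun setT f /\ gls_norm mu a b psi f <= 1.

Definition gls_theta_term {d} {T : measurableType d} {R : realType}
  (mu : {measure set T -> \bar R}) (psi : R -> \bar R) (u : T -> R) (p : R)
  : \bar R :=
  if psi p == +oo then 0
  else (Lnorm mu p%:E (EFin \o u)) `^ p *
       ((p * 2 `^ p * (fine (psi p)) `^ p)%R^-1)%:E.

Definition gls_theta {d} {T : measurableType d} {R : realType}
  (mu : {measure set T -> \bar R}) (a b : R) (psi : R -> \bar R) (u : T -> R)
  : \bar R :=
  ereal_inf [set gls_theta_term mu psi u p | p in `]a, b[%classic].

From HB Require Import structures.
From mathcomp Require Import all_boot all_order all_algebra.
From mathcomp Require Import all_classical all_reals all_analysis.
From mathcomp Require Import ring lra.
From mathcomp Require Import measurable_realfun.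
Set Implicit Arguments. Unset Strict Implicit. Unset Printing Implicit Defensive.
Import Order.TTheory GRing.Theory Num.Theory.
Local Open Scope classical_set_scope.
Local Open Scope ring_scope.

(* For p >= 2, integrating Clarkson's inequality
   |u + v|^p + |u - v|^p <= 2^(p-1) (|u|^p + |v|^p) shows that
   S := ||x + y||_p^p and D := ||x - y||_p^p satisfy S + D <= (2r)^p as soon as
   ||x||_p, ||y||_p <= r := psi(p).  Bernoulli's inequality (1 - t/p)^p >= 1 - t
   then gives (S / (2r)^p)^(1/p) <= 1 - D / (p (2r)^p), i.e.
   ||x + y||_p / psi(p) <= 2 - 2 D / (p 2^p psi(p)^p), which is stronger than the
   p-th instance of the claim. *)

Section powR_inequalities.
Context {R : realType}.
Implicit Types p r s t u v A B S D : R.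

Lemma powR_superadditive r A B : 1 <= r -> 0 <= A -> 0 <= B ->
  A `^ r + B `^ r <= (A + B) `^ r.
Proof.
move=> r1 A0 B0; have r0 : 0 < r by rewrite (lt_le_trans _ r1).
have AB0 : 0 <= A + B by rewrite addr_ge0.
have le_pow C : 0 <= C -> C <= A + B -> C `^ (r - 1) <= (A + B) `^ (r - 1).
  by move=> C0 CAB; rewrite ge0_ler_powR ?subr_ge0 ?nnegrE.
rewrite -(mulr_powRB1 A0 r0) -(mulr_powRB1 B0 r0) -(mulr_powRB1 AB0 r0) mulrDl.
by rewrite lerD // ler_wpM2l // le_pow // ?lerDl ?lerDr.
Qed.

Lemma bernoulli_powR p x : 1 <= p -> 0 <= x -> 1 + p * (x - 1) <= x `^ p.
Proof.
move=> p1 x0; have [<-|p_neq1] := eqVneq 1 p.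
  by rewrite powRr1 // mul1r addrC subrK.
have {p_neq1 p1} p1 : 1 < p by rewrite lt_neqAle p_neq1.
have p0 : 0 < p by rewrite (lt_trans _ p1).
pose q := p / (p - 1).
have q0 : 0 < q by rewrite divr_gt0 // subr_gt0.
have pq : p^-1 + q^-1 = 1.
  by rewrite /q invf_div -{1}(div1r p) -mulrDl subrKC mulfV // gt_eqF.
have := conjugate_powR x0 ler01 p0 q0 pq.
have qV : q^-1 = 1 - p^-1 by rewrite -pq addrC addKr.
rewrite mulr1 powR1 div1r qV.
have pV : p * p^-1 = 1 by rewrite mulfV // gt_eqF.
move=> /(ler_wpM2l (ltW p0)); rewrite mulrDr mulrBr mulr1 mulrCA !pV mulr1.
lra.
Qed.

Lemma powRV_le_1_sub p s t : 1 <= p -> 0 <= s -> 0 <= t -> s + t <= 1 ->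
  s `^ p^-1 <= 1 - t / p.
Proof.
move=> p1 s0 t0 st1; have p0 : 0 < p by rewrite (lt_le_trans _ p1).
have tp1 : t / p <= 1.
  by rewrite ler_pdivrMr // mul1r (le_trans _ p1) // (le_trans _ st1) // lerDr.
have c0 : 0 <= 1 - t / p by rewrite subr_ge0.
have s_le : s <= (1 - t / p) `^ p.
  apply: le_trans _ (bernoulli_powR p1 c0).
  have -> : 1 + p * (1 - t / p - 1) = 1 - t by field; rewrite gt_eqF.
  by rewrite lerBrDr.
have pV0 : 0 <= p^-1 by rewrite invr_ge0 ltW.
apply: le_trans (ge0_ler_powR pV0 _ _ s_le) _; rewrite ?nnegrE ?powR_ge0 //.
by rewrite -powRrM mulfV ?gt_eqF // powRr1.
Qed.

Lemma powRV_div_le_2_sub p r S D : 1 <= p -> 0 < r -> 0 <= S -> 0 <= D ->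
  S + D <= (2 * r) `^ p -> S `^ p^-1 / r <= 2 - D / (p * 2 `^ p * r `^ p).
Proof.
move=> p1 r0 S0 D0 SD; have p0 : 0 < p by rewrite (lt_le_trans _ p1).
set K := (2 * r) `^ p in SD.
have K0 : 0 < K by rewrite powR_gt0 // mulr_gt0.
have KE : p * 2 `^ p * r `^ p = p * K by rewrite -mulrA -powRM // ltW.
have SK1 : S / K + D / K <= 1 by rewrite -mulrDl ler_pdivrMr // mul1r.
have := powRV_le_1_sub p1 (divr_ge0 S0 (ltW K0)) (divr_ge0 D0 (ltW K0)) SK1.
have KV : K `^ p^-1 = 2 * r.
  by rewrite /K -powRrM mulfV ?gt_eqF // powRr1 // mulr_ge0 // ltW.
have -> : S `^ p^-1 = (S / K) `^ p^-1 * (2 * r).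
  by rewrite -KV -powRM ?divfK ?gt_eqF // ?divr_ge0 // ltW.
rewrite KE; move: (_ `^ p^-1) => u hu.
have DK0 : 0 <= D / (p * K) by rewrite divr_ge0 // mulr_ge0 ?ltW.
have -> : u * (2 * r) / r = 2 * u by field; rewrite gt_eqF.
have DKp : D / K / p = D / (p * K) by field; rewrite !gt_eqF.
by rewrite DKp in hu; lra.
Qed.

Lemma powR_midpoint_le p A B : 1 <= p -> 0 <= A -> 0 <= B ->
  (2^-1 * A + 2^-1 * B) `^ p <= 2^-1 * A `^ p + 2^-1 * B `^ p.
Proof.
move=> p1 A0 B0.
rewrite {2 4}(_ : 2^-1 = 1 - 2^-1); last by rewrite {2}(splitr 1) div1r addrK.
by apply: (convex_powR p1 (Itv01 _ _)) => //=;
  rewrite ?inE/= ?in_itv/= ?A0 ?B0 // ?invr_ge0// invf_le1 ?ler1n.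
Qed.

Lemma powR_norm_sqr p u : `|u| `^ p = (u ^+ 2) `^ (p / 2).
Proof.
rewrite -real_normK ?num_real // -powR_mulrn // -powRrM.
by rewrite mulrC mulfVK // pnatr_eq0.
Qed.

Lemma clarkson_powR p u v : 2 <= p ->
  `|u + v| `^ p + `|u - v| `^ p <= 2 `^ (p - 1) * (`|u| `^ p + `|v| `^ p).
Proof.
move=> p2; have p21 : 1 <= p / 2 by rewrite ler_pdivlMr // mul1r.
rewrite !powR_norm_sqr.
apply: le_trans (powR_superadditive p21 (sqr_ge0 _) (sqr_ge0 _)) _.
have -> : (u + v) ^+ 2 + (u - v) ^+ 2 = 2^-1 * (4 * u ^+ 2) + 2^-1 * (4 * v ^+ 2).
  by rewrite sqrrD sqrrB; field.
have u0 : 0 <= 4 * u ^+ 2 by rewrite mulr_ge0 ?sqr_ge0.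
have v0 : 0 <= 4 * v ^+ 2 by rewrite mulr_ge0 ?sqr_ge0.
apply: le_trans (powR_midpoint_le p21 u0 v0) _.
have h4 : 2^-1 * 4 `^ (p / 2) = 2 `^ (p - 1) :> R.
  rewrite (_ : 4 = 2 `^ 2); last by rewrite powR_mulrn // expr2 -natrM.
  rewrite -powRrM (mulrC 2 (p / 2)) mulfVK ?pnatr_eq0 // powRB ?pnatr_eq0 ?implybT //.
  by rewrite powRr1 // mulrC.
rewrite [(4 * u ^+ 2) `^ _]powRM ?sqr_ge0 // [(4 * v ^+ 2) `^ _]powRM ?sqr_ge0 //.
by rewrite !mulrA h4 -mulrDr.
Qed.

End powR_inequalities.

Section clarkson_Lnorm.
Context d (T : measurableType d) (R : realType) (mu : {measure set T -> \bar R}).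
Local Open Scope ereal_scope.

Local Notation "''N_' p [ f ]" := (Lnorm mu p%:E (EFin \o f)).

Lemma measurable_powR_norm p (f : T -> R) : measurable_fun setT f ->
  measurable_fun setT (fun x => ((`|f x| `^ p)%R)%:E).
Proof.
move=> mf; apply/measurable_EFinP.
by apply: (measurableT_comp (measurable_powR _)); exact: measurableT_comp.
Qed.

Lemma clarkson_Lnorm p (f g : T -> R) : (2 <= p)%R ->
  measurable_fun setT f -> measurable_fun setT g ->
  'N_p[(f \+ g)%R] `^ p + 'N_p[(f \- g)%R] `^ p <=
  (2 `^ (p - 1))%:E * ('N_p[f] `^ p + 'N_p[g] `^ p).
Proof.
move=> p2 mf mg; have p0 : p != 0%R by rewrite gt_eqF // (lt_le_trans _ p2).
have ge0 (h : T -> R) x : setT x -> 0 <= ((`|h x| `^ p)%R)%:E.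
  by move=> _; rewrite lee_fin powR_ge0.
have mpow := @measurable_powR_norm p.
have mfg := measurable_funD mf mg; have mfmg := measurable_funB mf mg.
rewrite !poweR_Lnorm //.
rewrite -(ge0_integralD mu measurableT (ge0 _) (mpow _ mf) (ge0 _) (mpow _ mg)).
rewrite -(ge0_integralD mu measurableT (ge0 _) (mpow _ mfg) (ge0 _) (mpow _ mfmg)).
rewrite -ge0_integralZl_EFin ?powR_ge0 //; last 2 first.
- by move=> x _; rewrite adde_ge0 ?ge0.
- by apply: emeasurable_funD; exact: mpow.
apply: ge0_le_integral => //.
- by move=> x _; rewrite adde_ge0 ?ge0.
- by apply: emeasurable_funD; exact: mpow.
- by apply: emeasurable_funM => //; apply: emeasurable_funD; exact: mpow.
by move=> x _; rewrite -!EFinD -EFinM lee_fin clarkson_powR.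
Qed.

Lemma Lnorm_powR_le p r (f : T -> R) : (0 <= p)%R -> (0 <= r)%R ->
  'N_p[f] <= r%:E -> 'N_p[f] `^ p <= (r `^ p)%:E.
Proof.
move=> p0 r0 Nf; rewrite -poweR_EFin gt0_ler_poweR //.
- by rewrite in_itv /= Lnorm_ge0 leey.
- by rewrite in_itv /= lee_fin r0 leey.
Qed.

Lemma clarkson_Lnorm_ball p r (f g : T -> R) : (2 <= p)%R -> (0 <= r)%R ->
  measurable_fun setT f -> measurable_fun setT g ->
  'N_p[f] <= r%:E -> 'N_p[g] <= r%:E ->
  'N_p[(f \+ g)%R] `^ p + 'N_p[(f \- g)%R] `^ p <= ((2 * r) `^ p)%:E.
Proof.
move=> p2 r0 mf mg Nf Ng; have p0 : (0 <= p)%R by rewrite (le_trans _ p2).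
apply: le_trans (clarkson_Lnorm p2 mf mg) _.
have Nfg := leeD (Lnorm_powR_le p0 r0 Nf) (Lnorm_powR_le p0 r0 Ng).
apply: le_trans (lee_wpmul2l _ Nfg) _; first by rewrite lee_fin powR_ge0.
rewrite -EFinD -EFinM lee_fin powRM //.
have -> : (2 `^ p = 2 `^ (p - 1) * 2 :> R)%R.
  by rewrite -{1}(subrK 1%R p) powRD ?pnatr_eq0 ?implybT // powRr1.
by rewrite -mulrA mulr_natl mulr2n.
Qed.

Lemma Lnorm_addB_le p r (f g : T -> R) : (2 <= p)%R -> (0 < r)%R ->
  measurable_fun setT f -> measurable_fun setT g ->
  'N_p[f] <= r%:E -> 'N_p[g] <= r%:E ->
  'N_p[(f \+ g)%R] * (r^-1)%:E <=
  2 - 'N_p[(f \- g)%R] `^ p * ((p * 2 `^ p * r `^ p)^-1)%:E.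
Proof.
move=> p2 r0 mf mg Nf Ng; have p0 : (0 < p)%R by rewrite (lt_le_trans _ p2).
have := clarkson_Lnorm_ball p2 (ltW r0) mf mg Nf Ng.
set S := 'N_p[_] `^ p; set D := 'N_p[_] `^ p => SD.
have S0 : 0 <= S by rewrite poweR_ge0.
have D0 : 0 <= D by rewrite poweR_ge0.
have Sfin : S \is a fin_num.
  rewrite ge0_fin_numE // (le_lt_trans _ (ltry ((2 * r) `^ p)%R)) //.
  by apply: le_trans SD; rewrite leeDl.
have Dfin : D \is a fin_num.
  rewrite ge0_fin_numE // (le_lt_trans _ (ltry ((2 * r) `^ p)%R)) //.
  by apply: le_trans SD; rewrite leeDr.
have -> : 'N_p[(f \+ g)%R] = S `^ p^-1.
  by rewrite -poweRrM mulfV ?gt_eqF // poweRe1 // Lnorm_ge0.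
rewrite -(fineK Sfin) -(fineK Dfin) -EFinD lee_fin in SD.
rewrite -(fineK Sfin) -(fineK Dfin) poweR_EFin -!EFinM -EFinB lee_fin.
by apply: powRV_div_le_2_sub; rewrite ?fine_ge0 // (le_trans _ p2) // ler1n.
Qed.
End clarkson_Lnorm.

Section grand_Lebesgue_space.
Context d (T : measurableType d) (R : realType) (mu : {measure set T -> \bar R}).
Local Open Scope ereal_scope.

Lemma gls_ratio_addB_le (psi : R -> \bar R) p (x y : T -> R) :
  (2 <= p)%R -> 0 < psi p -> measurable_fun setT x -> measurable_fun setT y ->
  gls_ratio mu psi x p <= 1 -> gls_ratio mu psi y p <= 1 ->
  gls_ratio mu psi (fun z => x z + y z)%R p <=
  2 - gls_theta_term mu psi (fun z => x z - y z)%R p.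
Proof.
move=> p2 psi_gt0 mx my; rewrite /gls_ratio /gls_theta_term.
case: eqP => [_ _ _|psi_fin]; first by rewrite sube0 lee_fin ler0n.
have [r psiE] : exists r, psi p = r%:E.
  by move: psi_gt0 psi_fin; case: (psi p) => // r; exists r.
have r0 : (0 < r)%R by rewrite -lte_fin -psiE.
rewrite psiE /= => Nx Ny; rewrite !lee_pdivrMr // !mul1e in Nx Ny.
exact: Lnorm_addB_le.
Qed.

End grand_Lebesgue_space.

Local Open Scope ereal_scope.

Theorem theorem3p1 (d : measure_display) (T : measurableType d) (R : realType)
  (mu : {measure set T -> \bar R})
  (mu_nontriv : nontrivial_measure mu) (mu_atomless : atomless mu)
  (a b : R) (ha : (2 < a)%R) (hab : (a < b)%R)
  (psi : R -> \bar R)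
  (psi_pos : forall p, p \in `]a, b[ -> 0 < psi p)
  (psi_inf : 0 < ereal_inf [set psi p | p in `]a, b[%classic])
  (x y : T -> R) :
  in_gls_ball mu a b psi x -> in_gls_ball mu a b psi y ->
  gls_norm mu a b psi (fun z => x z + y z)%R <= 2 - gls_theta mu a b psi (fun z => x z - y z)%R.
Proof.
move=> [mx Nx] [my Ny]; apply: ge_ereal_sup => _ [p pab <-].
have {}pab : p \in `]a, b[ by [].
have p2 : (2 <= p)%R.
  by move: pab; rewrite in_itv /= => /andP[ap _]; exact: ltW (lt_trans ha ap).
have theta_le : gls_theta mu a b psi (fun z => x z - y z)%R <=
    gls_theta_term mu psi (fun z => x z - y z)%R p by apply: ereal_inf_lbound; exists p.
apply: le_trans (leeB (lexx 2) theta_le).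
apply: gls_ratio_addB_le => //; first exact: psi_pos.
- by apply: le_trans Nx; apply: ereal_sup_ubound; exists p.
- by apply: le_trans Ny; apply: ereal_sup_ubound; exists p.
Qed.
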